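(* Let $B=F(b_1,\ldots,b_n)$ be a Ferrers board with $0\le b_1\le\cdots\le b_n$ and $b_n>0$, and let $B^-=F(b_1,\ldots,b_{n-1})$. Then for all $1\le k\le n$, $$\mathbf{rPT}_k(B,p,q,r)=\mathbf{rPT}_k(B^-,p,q,r)+P_{b_{n-(k-1)}}(p,q,r)\,\mathbf{rPT}_{k-1}(B^-,p,q,r).$$
   Context: For $m\ge1$, a $P$-tiling of height $m$ is a tiling of a column of height $m$ by tiles of heights 1, 2 and 3 whose bottom-most tile has height 1. $P_m(p,q,r)=\sum_T q^{\mathrm{one}(T)}p^{\mathrm{two}(T)}r^{\mathrm{three}(T)}$ over all $P$-tilings $T$ of height $m$, where $\mathrm{one},\mathrm{two},\mathrm{three}$ count tiles of height 1, 2, 3. There are no $P$-tilings of height 0 and $P_0(p,q,r)=0$. A Ferrers board $F(b_1,\ldots,b_n)$ has column heights $b_1,\ldots,b_n$ from left to right. A $P$-rook placement of $k$ tilings in $B=F(b_1,\ldots,b_n)$ is a choice of columns $1\le i_1<\cdots<i_k\le n$ with, for each $s=1,\ldots,k$, a $P$-tiling of height $b_{i_s-(s-1)}$ in column $i_s$ (the number of cells of column $i_s$ left uncanceled by the tilings in earlier columns, each tiling canceling top cells of columns to its right so that after $s$ tilings the untiled columns have $b_1,\ldots,b_{n-s}$ uncanceled cells). Its weight is $q^ap^br^c$ with $a,b,c$ the total numbers of tiles of height 1, 2, 3 used. $\mathbf{rPT}_k(B,p,q,r)$ is the sum of the weights of all $P$-rook placements of $k$ tilings in $B$ (the empty placement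 has weight 1; the sum is 0 if there are none). *)

From mathcomp Require Import all_boot all_order all_algebra.
Set Implicit Arguments. Unset Strict Implicit. Unset Printing Implicit Defensive.
Import GRing.Theory.
Local Open Scope ring_scope.

(* A P-tiling of height m is encoded as the list of its tile heights, listed
   from bottom to top: every entry is 1, 2 or 3, the entries sum to m, and the
   bottom-most tile (head of the list) has height 1. *)
Definition is_Ptiling (m : nat) (t : seq nat) : bool :=
  [&& all (fun x => (1 <= x <= 3)%N) t, sumn t == m & head 0%N t == 1%N].

Section Weights.
Variable R : comRingType.
Variables p q r : R.

Definition tile_weight (h : nat) : R :=
  if h == 1%N then q else if h == 2%N then p else r.

Definition Ptiling_weight (t : seq nat) : R := \prod_(h <- t) tile_weight h.

(* P_m(p,q,r): sum of weights over all P-tilings of height m.  A tiling of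
   height m has at most m tiles; tiles are enumerated as tuples over 'I_3
   (value i encodes a tile of height i+1). *)
Definition Pm (m : nat) : R :=
  \sum_(l < m.+1) \sum_(t : l.-tuple 'I_3 | is_Ptiling m [seq (val i).+1 | i <- t])
     Ptiling_weight [seq (val i).+1 | i <- t].

(* rPT_k(F(b_1..b_n)): sum over column choices i_1 < ... < i_k (0-based
   columns c_0 < ... < c_{k-1} in 'I_n) of the total weight of the choice of a
   P-tiling of height b_{i_s-(s-1)} in each chosen column; summing the product
   of weights over the independent tiling choices gives the product of the
   corresponding P-polynomials. *)
Definition rPT (k : nat) (b : seq nat) : R :=
  \sum_(c : k.-tuple 'I_(size b) | sorted ltn [seq val i | i <- c])
     \prod_(s < k) Pm (nth 0%N b (val (tnth c s) - s)).
End Weights.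

From mathcomp Require Import all_boot all_order all_algebra.
Set Implicit Arguments. Unset Strict Implicit. Unset Printing Implicit Defensive.

(* A placement of k tilings is determined by its strictly increasing sequence
   of columns.  Enumerating these sequences by whether they use the last column
   splits rPT_k(B) into the placements avoiding the last column, which live in
   B^-, and those using it, where the last tiling has height b_{n-(k-1)} and the
   first k-1 columns form a placement in B^-. *)

Fixpoint incr_seqs (n k : nat) : seq (seq nat) :=
  match n with
  | 0 => if k is 0 then [:: [::]] else [::]
  | m.+1 => incr_seqs m k ++ (if k is k'.+1 then map (rcons^~ m) (incr_seqs m k') else [::])
  end.

Definition incr_seq_of (n k : nat) (s : seq nat) : bool :=
  [&& size s == k, all (fun x => x < n) s & pairwise ltn s].

Lemma mem_map_rcons (L : seq (seq nat)) s x m :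
  (rcons s x \in map (rcons^~ m) L) = (x == m) && (s \in L).
Proof.
apply/mapP/andP => [[t tL /eqP]|[/eqP -> sL]]; last by exists s.
by rewrite eqseq_rcons => /andP[/eqP -> /eqP ->].
Qed.

Lemma all_ltn_trans (s : seq nat) x y :
  x <= y -> all (fun z => z < x) s -> all (fun z => z < y) s.
Proof. by move=> xy; apply: sub_all => z /= /leq_trans; apply. Qed.

Lemma mem_incr_seqs n k s : (s \in incr_seqs n k) = incr_seq_of n k s.
Proof.
rewrite /incr_seq_of; elim: n k s => [|m IH] k s /=.
  by case: k => [|k]; case: s => //= *; rewrite andbF.
rewrite mem_cat IH; case: k => [|k].
  by case: s => //=; rewrite orbF.
case/lastP: s => [|s x] //=.
  by apply/mapP => -[t _] /(congr1 size); rewrite size_rcons.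
rewrite mem_map_rcons IH size_rcons eqSS !all_rcons pairwise_rcons.
case: (ltngtP x m) => [xm|mx|->] /=.
- rewrite orbF ltnS ltnW //=.
  case Ax: (all (fun y => y < x) s); rewrite ?andbF //.
  by rewrite (all_ltn_trans (ltnW xm) Ax) (all_ltn_trans (leq_trans (ltnW xm) (leqnSn m)) Ax).
- by rewrite andbF /= ltnS leqNgt mx /= andbF.
- rewrite andbF ltnSn /=; case Am: (all (fun y => y < m) s); rewrite ?andbF //.
  by rewrite (all_ltn_trans (leqnSn m) Am).
Qed.

Lemma uniq_incr_seqs n k : uniq (incr_seqs n k).
Proof.
elim: n k => [|m IH] k /=; first by case: k.
rewrite cat_uniq IH /=; case: k => [|k] //=.
rewrite map_inj_uniq ?IH ?andbT; last exact: rcons_injl.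
apply/hasPn => t /mapP[s _ ->]; rewrite mem_incr_seqs /incr_seq_of all_rcons ltnn.
by rewrite andbF.
Qed.

Lemma perm_sorted_tuples_incr_seqs n k :
  perm_eq [seq s <- [seq map val (tval c) | c <- index_enum (k.-tuple 'I_n)] | pairwise ltn s]
    (incr_seqs n k).
Proof.
apply: uniq_perm.
- rewrite filter_uniq // map_inj_uniq ?index_enum_uniq //.
  by move=> c1 c2 /(inj_map val_inj) /val_inj.
- exact: uniq_incr_seqs.
move=> s; rewrite mem_filter mem_incr_seqs /incr_seq_of andbC andbA; congr (_ && _).
apply/mapP/andP => [[c _ ->]|[/eqP sk sn]].
  rewrite size_map size_tuple eqxx; split => //.
  by rewrite all_map; apply/allP => i _ /=.
have val_pmap_insub : map val (pmap (insub : nat -> option 'I_n) s) = s.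
  by elim: s sn {sk} => //= x s IHs /andP[xn sn]; rewrite insubT /= IHs.
have size_pmap : size (pmap (insub : nat -> option 'I_n) s) == k.
  by rewrite -(size_map val) val_pmap_insub sk.
by exists (Tuple size_pmap); rewrite ?mem_index_enum //= val_pmap_insub.
Qed.

Import GRing.Theory.
Local Open Scope ring_scope.

Section RookPolynomial.
Variables (R : comRingType) (p q r : R).

Definition rook_weight (b : seq nat) (k : nat) (s : seq nat) : R :=
  \prod_(i < k) Pm p q r (nth 0%N b (nth 0%N s i - i)).

Lemma rPT_incr_seqs (b : seq nat) k :
  rPT p q r k b = \sum_(s <- incr_seqs (size b) k) rook_weight b k s.
Proof.
rewrite /rPT (eq_bigr (fun c : k.-tuple 'I_(size b) => rook_weight b k (map val c))).
  rewrite -(big_map (fun c : k.-tuple 'I_(size b) => map val c) (sorted ltn)).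
  rewrite (eq_bigl (pairwise ltn)); last by move=> s; rewrite sorted_pairwise //; apply: ltn_trans.
  by rewrite -big_filter (perm_big _ (perm_sorted_tuples_incr_seqs _ _)).
move=> c _; apply: eq_bigr => i _.
by rewrite -(tnth_map val) (tnth_nth 0%N).
Qed.

Lemma rook_weight_take (b : seq nat) m k s :
  incr_seq_of m k s -> rook_weight b k s = rook_weight (take m b) k s.
Proof.
case/and3P => /eqP sk sm _; apply: eq_bigr => i _; rewrite nth_take //.
have /(allP sm) /= : nth 0%N s i \in s by rewrite mem_nth // sk.
exact: leq_ltn_trans (leq_subr _ _).
Qed.

Lemma rook_weight_rcons (b : seq nat) k s m :
  size s = k ->
  rook_weight b k.+1 (rcons s m) = Pm p q r (nth 0%N b (m - k)) * rook_weight b k s.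
Proof.
move=> sk; rewrite /rook_weight big_ord_recr /= nth_rcons sk ltnn eqxx mulrC.
by congr (_ * _); apply: eq_bigr => i _; rewrite nth_rcons sk ltn_ord.
Qed.

Lemma rPT_last_column (b : seq nat) m k :
  size b = m.+1 ->
  rPT p q r k.+1 b =
    rPT p q r k.+1 (take m b) + Pm p q r (nth 0%N b (m - k)) * rPT p q r k (take m b).
Proof.
move=> bm; have size_take_b : size (take m b) = m by rewrite size_take bm ltnSn.
rewrite !rPT_incr_seqs bm size_take_b /= big_cat big_map mulr_sumr.
congr (_ + _); apply: eq_big_seq => s; rewrite mem_incr_seqs => s_incr.
  exact: rook_weight_take.
case/and3P: (s_incr) => /eqP sk _ _.
by rewrite rook_weight_rcons // (rook_weight_take _ s_incr).
Qed.

End RookPolynomial.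

Theorem theorem7 (R : comRingType) (p q r : R) (b : seq nat) :
  sorted leq b -> (0 < last 0 b)%N ->
  forall k : nat, (1 <= k <= size b)%N ->
    rPT p q r k b =
      rPT p q r k (take (size b).-1 b)
      + Pm p q r (nth 0%N b (size b - k)) * rPT p q r k.-1 (take (size b).-1 b).
Proof.
move=> _ _ [//|k] /andP[_ kn].
case bm: (size b) kn => [//|m] _.
by rewrite subSS (rPT_last_column _ _ _ _ bm).
Qed.
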